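(* Let $\sigma$ be the sign function on $\mathbb{R}$ (with $\sigma(0)=0$). For $\varepsilon>0$ and $\Phi\in\mathscr{C}_c^\infty(\mathbb{R}^2)$ define $$Kir_\varepsilon\Phi(x)=\big(\varepsilon\sigma(x)\mathcal{X}_{\{|x|\le\varepsilon\}}(x)+x\mathcal{X}_{\{|x|>\varepsilon\}}(x)\big)\int_{\{y:|x-y|>\varepsilon\}}\Phi(x,y)\frac{dy}{x-y},$$ which is the Kirchhoff divergence of $\Phi$ with respect to the distribution $T_\varepsilon$ induced by the function $h^\varepsilon(x)=\frac1x\mathcal{X}_{\{|x|>\varepsilon\}}(x)+\frac{\sigma(x)}{\varepsilon}\mathcal{X}_{[-\varepsilon,\varepsilon]}(x)$ and $\langle\!\langle S_\varepsilon,\Theta\rangle\!\rangle=\iint_{\{|x-y|>\varepsilon\}}\frac{\Theta(x,y)}{x-y}\,dx\,dy$. Then: (i) $Kir_\varepsilon\Phi(x)\to xH_y\Phi(x,x)$ as $\varepsilon\to0$, for every $x\in\mathbb{R}$; (ii) for $T=\mathrm{p.v.}\frac1x$ and $\langle\!\langle S,\Theta\rangle\!\rangle=\int_{\mathbb{R}}H_y\Theta(x,x)\,dx$, $\Theta\in\mathscr{C}_c^\infty(\mathbb{R}^2)$, the function $\psi(x)=xH_y\Phi(x,x)$ is the Kirchhoff divergence: $\langle T,\varphi\psi\rangle=\langle\!\langle S,\varphi\Phi\rangle\!\rangle$ for every $\varphi\in\mathscr{C}_c^\infty(\mathbb{R})$.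
   Context: $\langle\mathrm{p.v.}\frac1x,\varphi\rangle=\lim_{\varepsilon\to0}\int_{|x|>\varepsilon}\frac{\varphi(x)}{x}dx$. For a function $\Theta(x,y)$, $H_y\Theta(x,z)=\lim_{\varepsilon\to0}\int_{|z-y|>\varepsilon}\frac{\Theta(x,y)}{z-y}dy$ is the Hilbert transform of $y\mapsto\Theta(x,y)$ evaluated at $z$. $(\varphi\Phi)(x,y)=\varphi(x)\Phi(x,y)$. *)

From HB Require Import structures.
From mathcomp Require Import all_boot all_order all_algebra.
From mathcomp Require Import all_classical all_reals all_analysis.
Set Implicit Arguments. Unset Strict Implicit. Unset Printing Implicit Defensive.
Import Order.TTheory GRing.Theory Num.Theory.
Import numFieldNormedType.Exports.
Local Open Scope classical_set_scope.
Local Open Scope ring_scope.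

Section Defs.
Variable R : realType.
Local Notation mu := (@lebesgue_measure R).

(* iterated partial derivatives of a function of two real variables;
   true = derivative in the first variable, false = in the second *)
Fixpoint pderiv (l : seq bool) (f : R -> R -> R) : R -> R -> R :=
  match l with
  | [::] => f
  | b :: l' => let g := pderiv l' f in
     if b then (fun x y => derive1 (fun t => g t y) x)
     else (fun x y => derive1 (fun t => g x t) y)
  end.

Definition smooth2 (f : R -> R -> R) : Prop :=
  forall l : seq bool,
    (forall x y, derivable (fun t => pderiv l f t y) x 1 /\
                 derivable (fun t => pderiv l f x t) y 1) /\
    continuous (fun p : R * R => pderiv l f p.1 p.2).

Definition test2 (f : R -> R -> R) : Prop :=
  smooth2 f /\ exists M : R, forall x y, M < `|x| \/ M < `|y| -> f x y = 0.

(* C^infty(R): all derivatives exist (hence are continuous) *)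
Definition smooth1 (f : R -> R) : Prop :=
  forall (n : nat) (x : R), derivable (derive1n n f) x 1.

Definition test1 (f : R -> R) : Prop :=
  smooth1 f /\ exists M : R, forall x, M < `|x| -> f x = 0.

Definition pv_inv (phi : R -> R) : R :=
  lim ((fun e => \int[mu]_(x in [set x | e < `|x|]) (phi x / x)) @ 0^'+).

Definition hilbert_y (Th : R -> R -> R) (x z : R) : R :=
  lim ((fun e => \int[mu]_(y in [set y | e < `|z - y|]) (Th x y / (z - y)))
         @ 0^'+).

Definition S_pairing (Th : R -> R -> R) : R :=
  \int[mu]_(x in [set: R]) hilbert_y Th x x.

Definition Kir (e : R) (Phi : R -> R -> R) (x : R) : R :=
  (if `|x| <= e then e * Num.sg x else x) *
  \int[mu]_(y in [set y | e < `|x - y|]) (Phi x y / (x - y)).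

End Defs.

From HB Require Import structures.
From mathcomp Require Import all_boot all_order all_algebra.
From mathcomp Require Import all_classical all_reals all_analysis.
From mathcomp Require Import ring lra measurable_realfun.
Set Implicit Arguments. Unset Strict Implicit. Unset Printing Implicit Defensive.
Import Order.TTheory GRing.Theory Num.Theory.
Import numFieldNormedType.Exports.
Local Open Scope classical_set_scope.
Local Open Scope ring_scope.

(* Off the diagonal, Phi(x,y)/(x-y) = dquot x y + Phi(x,x)/(x-y), where the
   difference quotient dquot extends continuously to the diagonal (mean value
   theorem), hence is bounded on compacts.  Cutting [x-e, x+e] out of the
   integral of a bounded function changes it by O(e), and the explicit kernel
   Phi(x,x)/(x-y) integrates over [-N,N] minus [x-e, x+e] to a logarithm that
   does not depend on e.  So the truncated Hilbert transform converges, to a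
   function of x that is continuous near the support of Phi and vanishes
   outside it; Kir_e Phi(x) is x times the truncated transform once e < |x|.
   For (ii), <p.v. 1/x, x F> = int F for bounded integrable F by the same O(e)
   bound, and phi(x) factors out of the y-integral defining H_y(phi Phi). *)

Section RealAnalysis.
Variable R : realType.
Local Notation mu := (@lebesgue_measure R).

Lemma continuous_bounded_square (f : R * R -> R) (c : R) : continuous f ->
  exists2 K, 0 <= K & forall x y, `|x| <= c -> `|y| <= c -> `|f (x, y)| <= K.
Proof.
move=> cf.
have cK : compact (`[-c, c] `*` `[-c, c]) by apply: compact_setX; exact: segment_compact.
have [N [_ HN]] := compact_bounded (continuous_compact (continuous_subspaceT cf) cK).
exists (`|N| + 1); first by rewrite addr_ge0.
move=> x y xc yc; apply: (HN (`|N| + 1)); first by rewrite (le_lt_trans (ler_norm N)) ?ltrDl.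
by exists (x, y) => //; split => /=; rewrite in_itv /= -ler_norml.
Qed.

Lemma continuous_bounded_segment (f : R -> R) (c : R) :
  (forall x, `|x| <= c -> {for x, continuous f}) ->
  exists2 K, 0 <= K & forall x, `|x| <= c -> `|f x| <= K.
Proof.
move=> cf.
have cfc : {in `[-c, c]%classic, continuous f}.
  by move=> x; rewrite inE /= in_itv /= -ler_norml; exact: cf.
have [N [_ HN]] := compact_bounded
  (continuous_compact (continuous_in_subspaceT cfc) (@segment_compact _ (-c) c)).
exists (`|N| + 1) => [|x xc]; first by rewrite addr_ge0.
apply: (HN (`|N| + 1)); first by rewrite (le_lt_trans (ler_norm N)) ?ltrDl.
by exists x => //; rewrite /= in_itv /= -ler_norml.
Qed.

Lemma integrable_bounded_compact_support (A : set R) (f : R -> R) (K r : R) :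
  measurable A -> measurable_fun A f -> (forall y, A y -> `|f y| <= K) ->
  (forall y, A y -> r < `|y| -> f y = 0) -> mu.-integrable A (EFin \o f).
Proof.
move=> mA mf fK f0.
apply: (@le_integrable _ _ _ mu A mA _
  (fun y => ((`|K|)%:E * (\1_(`[-r, r]%classic : set R) y : R)%:E)%E)).
- exact/measurable_EFinP.
- move=> y Ay /=; rewrite lee_fin normrM normr_id indicE.
  have [yr|yr] := lerP `|y| r.
  + rewrite mem_set /=; last by rewrite in_itv /= -ler_norml.
    by rewrite normr1 mulr1 (le_trans (fK y Ay) (ler_norm K)).
  + rewrite f0 // normr0 memNset ?normr0 ?mulr0 //=.
    by rewrite in_itv /= -ler_norml; apply/negP; rewrite -ltNge.
- apply: (@integrableS _ _ _ mu setT A) => //.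
  by apply: integrableZl => //; exact: integrable_indic_itv.
Qed.

Lemma Rintegral_setI_vanishing (A E : set R) (f : R -> R) :
  (forall y, A y -> ~ E y -> f y = 0) ->
  \int[mu]_(y in A) f y = \int[mu]_(y in A `&` E) f y.
Proof.
move=> f0; rewrite [RHS]Rintegral_mkcondr; apply: eq_Rintegral => y; rewrite inE => Ay.
rewrite patchE; case: ifPn => // /negP yE.
by apply: f0 => // Ey; apply: yE; exact: mem_set.
Qed.

Lemma setC_itv_center (x e : R) : ~` `[x - e, x + e] = [set y | e < `|x - y|].
Proof.
apply/funext => y; apply/propext; rewrite /= in_itv /= ltNge ler_distlC.
by split => /negP.
Qed.

Lemma measurable_far (x e : R) : measurable [set y : R | e < `|x - y|].
Proof. by rewrite -setC_itv_center; exact: measurableC. Qed.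

Lemma Rintegral_excision_le (A : set R) (f : R -> R) (x e K : R) : measurable A ->
  mu.-integrable A (EFin \o f) -> 0 < e -> `[x - e, x + e] `<=` A ->
  (forall y, A y -> `|f y| <= K) ->
  `|\int[mu]_(y in A) f y - \int[mu]_(y in A `&` [set y | e < `|x - y|]) f y|
    <= K * (e *+ 2).
Proof.
move=> mA iA e0 IA fK.
set I : set R := `[x - e, x + e]%classic.
have mI : measurable I by exact: measurable_itv.
have AE : A = (A `&` [set y | e < `|x - y|]) `|` I.
  by rewrite -setC_itv_center -setDE setUC setDUK.
have iI : mu.-integrable I (EFin \o f) by exact: integrableS iA.
rewrite {1}AE Rintegral_setU //; first last.
- by rewrite -setC_itv_center; apply/disj_setPS => y [[_ +] ?].
- by rewrite -AE.
- by apply: measurableI => //; exact: measurable_far.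
rewrite addrAC subrr add0r (le_trans (@le_normr_Rintegral _ _ _ mu I f mI iI)) //.
have muI : mu I = (e *+ 2)%:E.
  rewrite lebesgue_measure_itv /= lte_fin ltrD2l gtrN // -EFinD.
  by congr (_%:E); rewrite mulr2n; ring.
have iK : mu.-integrable I (EFin \o cst K).
  apply: measurable_bounded_integrable => //; last exact: bounded_cst.
  by change (mu I < +oo)%E; rewrite muI ltry.
rewrite (le_trans (@le_Rintegral _ _ _ mu I _ _ mI (integrable_norm iI) iK _)) //.
  by move=> y Iy; apply: fK; exact: IA.
rewrite Rintegral_cst //; change (K * fine (mu I) <= K * (e *+ 2)).
by rewrite muI.
Qed.

Lemma cvg_at_right0_linear_rate (f : R -> R) (l C : R) :
  (\forall e \near 0^'+, `|l - f e| <= C * e) -> f e @[e --> 0^'+] --> l.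
Proof.
move=> fC; apply/cvgrPdist_le => eps eps0.
have C1 : 0 < `|C| + 1 by rewrite ltr_wpDl.
near=> e.
have e0 : 0 < e by near: e; exact: nbhs_right_gt.
have ee : e < eps / (`|C| + 1) by near: e; apply: nbhs_right_lt; rewrite divr_gt0.
apply: (le_trans (_ : _ <= C * e)); first by near: e.
rewrite ltr_pdivlMr // in ee.
apply: (le_trans (ler_wpM2r (ltW e0) (ler_norm C))); apply: ltW; apply: le_lt_trans ee.
by rewrite mulrDr mulr1 mulrC lerDl ltW.
Unshelve. all: by end_near.
Qed.

Lemma pv_inv_mulr_id (F : R -> R) (K : R) : mu.-integrable setT (EFin \o F) ->
  (forall x, `|F x| <= K) -> pv_inv (fun x => x * F x) = \int[mu]_x F x.
Proof.
move=> iF FK; apply: (cvg_lim (@Rhausdorff R)).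
have far0 e : [set x | e < `|x|] = setT `&` [set x : R | e < `|0 - x|].
  by rewrite setTI; apply/seteqP; split => y /=; rewrite sub0r normrN.
have cancel_id : {near 0^'+, (fun e => \int[mu]_(x in [set x | e < `|x|]) F x) =1
    (fun e => \int[mu]_(x in [set x | e < `|x|]) (x * F x / x))}.
  near=> e; apply: eq_Rintegral => x; rewrite inE /= => ex.
  have x0 : x != 0.
    by apply: contraTneq ex => ->; rewrite normr0 -leNgt ltW //; near: e; exact: nbhs_right_gt.
  by rewrite mulrAC divff // mul1r.
apply: cvg_trans (near_eq_cvg cancel_id) _.
apply: (@cvg_at_right0_linear_rate _ _ (K *+ 2)); near=> e.
have e0 : 0 < e by near: e; exact: nbhs_right_gt.
rewrite far0 mulrnAl -mulrnAr.
by apply: Rintegral_excision_le => //; rewrite ?add0r ?sub0r.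
Unshelve. all: by end_near.
Qed.

Lemma inv_subr_continuous (x y : R) : y != x -> {for y, continuous (fun t => (x - t)^-1)}.
Proof.
move=> yx; apply: cvgV; first by rewrite subr_eq0 eq_sym.
by apply: cvgB; [exact: cvg_cst | exact: cvg_id].
Qed.

Lemma measurable_fun_inv_subr (x : R) (A : set R) : measurable A ->
  A `<=` [set y | y != x] -> measurable_fun A (fun y => (x - y)^-1).
Proof.
move=> mA Ax; apply: (@measurable_funS _ _ _ _ [set y | y != x]) => //.
  by apply: open_measurable; exact: open_neq.
apply: open_continuous_measurable_fun; first exact: open_neq.
by move=> y; rewrite inE; exact: inv_subr_continuous.
Qed.

Lemma far_neq (x e y : R) : 0 <= e -> e < `|x - y| -> y != x.
Proof. by move=> e0; apply: contraTneq => ->; rewrite subrr normr0 -leNgt. Qed.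

Lemma integrable_inv_subr_far (x a b e : R) (A : set R) : 0 < e -> measurable A ->
  A `<=` `[a, b] `&` [set y | e < `|x - y|] ->
  mu.-integrable A (EFin \o (fun y => (x - y)^-1)).
Proof.
move=> e0 mA AS.
apply: (@integrable_bounded_compact_support A _ e^-1 (`|a| + `|b|)) => //.
- by apply: measurable_fun_inv_subr => // y /AS [_]; exact: far_neq (ltW e0).
- move=> y /AS [_ /= ey]; rewrite normfV lef_pV2 ?posrE ?ltW //.
  exact: lt_trans ey.
- move=> y /AS [/= + _]; rewrite in_itv /= => /andP[ay yb].
  have := ler_norm b; have := normr_ge0 b; have := normr_ge0 a.
  have : - a <= `|a| by rewrite -normrN ler_norm.
  by rewrite ltr_normr => ? ? ? ? /orP[] ?; lra.
Qed.

Lemma is_derive_ln_comp (g : R -> R) (y dg : R) : 0 < g y -> is_derive y 1 g dg ->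
  is_derive y 1 (fun t => ln (g t)) (dg / g y).
Proof. by move=> gy g'; rewrite mulrC; exact: is_derive1_comp (is_derive1_ln gy) g'. Qed.

Lemma Rintegral_is_derive (f F : R -> R) (a b : R) : a < b ->
  {within `[a, b], continuous f} ->
  (forall y, a <= y <= b -> is_derive y 1 F (f y)) ->
  \int[mu]_(y in `[a, b]) f y = F b - F a.
Proof.
move=> ab cf dF.
have cF y : a <= y <= b -> {for y, continuous F}.
  move=> /dF dFy; apply/differentiable_continuous/derivable1_diffP.
  exact: (@ex_derive _ _ _ _ _ _ _ dFy).
rewrite /Rintegral (@continuous_FTC2 _ _ F _ _ ab cf) //.
- split.
  + move=> y; rewrite in_itv /= => /andP[ay yb].
    by apply: (@ex_derive _ _ _ _ _ _ _ (dF y _)); rewrite !ltW.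
  + by apply: cvg_at_right_filter; apply: cF; rewrite lexx ltW.
  + by apply: cvg_at_left_filter; apply: cF; rewrite lexx ltW.
- move=> y; rewrite in_itv /= => /andP[ay yb]; rewrite derive1E.
  by apply: (@derive_val _ _ _ _ _ _ _ (dF y _)); rewrite !ltW.
Qed.

Lemma Rintegral_inv_subr_left (x a b : R) : a < b -> b < x ->
  \int[mu]_(y in `[a, b]) (x - y)^-1 = ln (x - a) - ln (x - b).
Proof.
move=> ab bx.
have dF y : a <= y <= b -> is_derive y 1 (fun t => - ln (x - t)) (x - y)^-1.
  move=> /andP[_ yb]; have xy : 0 < x - y by rewrite subr_gt0 (le_lt_trans yb).
  have dsub : is_derive y 1 (fun t => x - t) (-1) by apply: is_derive_eq; ring.
  have := is_deriveN (@is_derive_ln_comp (fun t => x - t) _ _ xy dsub).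
  by rewrite mulN1r opprK.
rewrite (@Rintegral_is_derive _ _ _ _ ab _ dF); first by rewrite opprK addrC.
apply: continuous_in_subspaceT => y; rewrite inE /= in_itv /= => /andP[_ yb].
by apply: inv_subr_continuous; rewrite lt_eqF // (le_lt_trans yb).
Qed.

Lemma Rintegral_inv_subr_right (x a b : R) : x < a -> a < b ->
  \int[mu]_(y in `[a, b]) (x - y)^-1 = ln (a - x) - ln (b - x).
Proof.
move=> xa ab.
have dF y : a <= y <= b -> is_derive y 1 (fun t => - ln (t - x)) (x - y)^-1.
  move=> /andP[ay _]; have yx : 0 < y - x by rewrite subr_gt0 (lt_le_trans xa).
  have dsub : is_derive y 1 (fun t => t - x) 1 by apply: is_derive_eq; ring.
  have := is_deriveN (@is_derive_ln_comp (fun t => t - x) _ _ yx dsub).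
  by rewrite mul1r -invrN opprB.
rewrite (@Rintegral_is_derive _ _ _ _ ab _ dF); first by rewrite opprK addrC.
apply: continuous_in_subspaceT => y; rewrite inE /= in_itv /= => /andP[ay _].
by apply: inv_subr_continuous; rewrite gt_eqF // (lt_le_trans xa).
Qed.

Lemma Rintegral_inv_subr_excised (x a b e : R) : 0 < e -> a < x - e -> x + e < b ->
  \int[mu]_(y in `[a, b] `&` [set y | e < `|x - y|]) (x - y)^-1 =
    ln (x - a) - ln (b - x).
Proof.
move=> e0 ae eb.
have split_far : `[a, b] `&` [set y | e < `|x - y|] = `[a, x - e[ `|` `]x + e, b].
  apply/seteqP; split => y /=; rewrite !in_itv /= ?ltr_normr ?opprB.
  - by move=> [/andP[ay yb] /orP[] ?]; [left | right]; apply/andP; split => //; lra.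
  - case=> /andP[? ?]; (split; first by apply/andP; split; lra).
      by apply/orP; left; lra.
    by apply/orP; right; lra.
have mS : measurable (`[a, b] `&` [set y | e < `|x - y|]).
  by apply: measurableI => //; exact: measurable_far.
have iS := integrable_inv_subr_far e0 mS (@subset_refl _ _).
rewrite split_far Rintegral_setU //; first last.
- by apply/disj_setPS => y [/=]; rewrite !in_itv /= => /andP[_ ?] /andP[? _]; lra.
- by rewrite -split_far.
rewrite Rintegral_itv_bndo_bndc; last first.
  by apply: integrableS iS => //; rewrite split_far; exact: subsetUl.
rewrite Rintegral_itv_obnd_cbnd; last first.
  by apply: integrableS iS => //; rewrite split_far; exact: subsetUr.
rewrite Rintegral_inv_subr_left ?Rintegral_inv_subr_right //; try lra.
have -> : x - (x - e) = e by ring.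
have -> : x + e - x = e by ring.
by ring.
Qed.

End RealAnalysis.

Section TruncatedHilbert.
Variables (R : realType) (Phi : R -> R -> R).
Local Notation mu := (@lebesgue_measure R).
Let Py x y := derive1 (fun t => Phi x t) y.
Hypothesis Phi_cont : continuous (fun p : R * R => Phi p.1 p.2).
Hypothesis Py_cont : continuous (fun p : R * R => Py p.1 p.2).
Hypothesis Phi_derivable : forall x y, derivable (Phi x) y 1.

Lemma cvg_Phi (T : Type) (F : set_system T) (FF : Filter F) (f g : T -> R) a b :
  f @ F --> a -> g @ F --> b -> Phi (f t) (g t) @[t --> F] --> Phi a b.
Proof.
by move=> fa gb; apply: continuous2_cvg => //; exact: (@Phi_cont (a, b)).
Qed.

Lemma Phi_continuous_r x : continuous (Phi x).
Proof. by move=> y; apply: cvg_Phi; [exact: cvg_cst | exact: cvg_id]. Qed.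

Definition dquot x y := if y == x then - Py x x else (Phi x y - Phi x x) / (x - y).

Lemma dquot_mvt x y : exists2 c, (x <= c <= y) || (y <= c <= x) & dquot x y = - Py x c.
Proof.
rewrite /dquot; have [->|yx] := eqVneq y x; first by exists x; rewrite ?lexx.
have mvt u v : u < v -> exists2 c, u < c < v & Phi x v - Phi x u = Py x c * (v - u).
  move=> uv; have [c] : exists2 c, c \in `]u, v[ & Phi x v - Phi x u = Py x c * (v - u).
    apply: MVT => // [c _|]; first by rewrite /Py derive1E; exact/derivableP.
    by apply: derivable_within_continuous => t _.
  by rewrite in_itv /= => cuv ->; exists c.
have xy0 : x - y != 0 by rewrite subr_eq0 eq_sym.
case: (ltgtP x y) => [xy|yx'|xy]; last by rewrite xy eqxx in yx.
- have [c /andP[c1 c2] ->] := mvt _ _ xy.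
  by exists c; rewrite ?(ltW c1) ?(ltW c2) //; field.
- have [c /andP[c1 c2] Ec] := mvt _ _ yx'.
  exists c; first by rewrite (ltW c1) (ltW c2) orbT.
  by rewrite -opprB Ec; field.
Qed.

Lemma dquot_near_diag p e : 0 < e -> exists2 d, 0 < d &
  forall x t, `|x - p| < d -> `|t - p| < d -> `|dquot x t + Py p p| < e.
Proof.
move=> e0; have := @Py_cont (p, p); move/cvgrPdist_lt => /(_ e e0).
move/nbhs_ballP => [d /= d0 Hd].
exists d => // x t xp tp; have [c cxt ->] := dquot_mvt x t.
rewrite addrC; apply: (Hd (x, c)); split => /=; first by rewrite /ball /= distrC.
move: xp tp; rewrite /ball /= !ltr_distl => /andP[? ?] /andP[? ?].
by case/orP: cxt => /andP[? ?]; apply/andP; split; lra.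
Qed.

Lemma cvg_dquot (T : Type) (F : set_system T) (FF : Filter F) (f g : T -> R) a b :
  f @ F --> a -> g @ F --> b -> dquot (f t) (g t) @[t --> F] --> dquot a b.
Proof.
have [<- fb gb|ba fa gb] := eqVneq a b.
  have -> : dquot a a = - Py a a by rewrite /dquot eqxx.
  apply/cvgrPdist_lt => e e0; have [d d0 Hd] := dquot_near_diag a e0.
  near=> t; rewrite -opprD normrN addrC; apply: Hd; rewrite distrC; near: t.
    exact: (cvgr_dist_lt _ _ fb _ d0).
  exact: (cvgr_dist_lt _ _ gb _ d0).
have gf : \forall t \near F, g t - f t != 0.
  by apply: cvgr_neq0; [exact: cvgB gb fa | rewrite subr_eq0 eq_sym].
have quot : {near F, (fun t => (Phi (f t) (g t) - Phi (f t) (f t)) / (f t - g t)) =1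
    (fun t => dquot (f t) (g t))}.
  by near=> t; rewrite /dquot ifF //; apply/negbTE; rewrite -subr_eq0; near: t.
apply: cvg_trans (near_eq_cvg quot) _; rewrite /dquot eq_sym (negbTE ba).
apply: cvgM; first by apply: cvgB; exact: cvg_Phi.
apply: cvgV; first by rewrite subr_eq0.
exact: cvgB.
Unshelve. all: by end_near.
Qed.

Lemma dquot_continuous_l y : continuous (fun x => dquot x y).
Proof. by move=> x; apply: cvg_dquot; [exact: cvg_id | exact: cvg_cst]. Qed.

Lemma dquot_continuous_r x : continuous (dquot x).
Proof. by move=> y; apply: cvg_dquot; [exact: cvg_cst | exact: cvg_id]. Qed.

Variable M : R.
Hypothesis Phi_supp : forall x y, M < `|x| \/ M < `|y| -> Phi x y = 0.
(* The margin keeps [x - e, x + e] inside [-N, N] whenever |x| < M + 1, e < 1. *)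
Local Notation N := (M + 2).

Lemma dquot_bounded : exists L, forall x y, `|x| <= N -> `|y| <= N -> `|dquot x y| <= L.
Proof.
have [L _ PyL] := continuous_bounded_square N Py_cont.
exists L => x y xN yN; have [c cxy ->] := dquot_mvt x y; rewrite normrN.
apply: (PyL x c xN); move: xN yN; rewrite !ler_norml => /andP[? ?] /andP[? ?].
by case/orP: cxy => /andP[? ?]; apply/andP; split; lra.
Qed.

Lemma integrable_dquot x (A : set R) : measurable A -> A `<=` `[-N, N] ->
  mu.-integrable A (EFin \o dquot x).
Proof.
move=> mA AN; apply: (@integrableS _ _ _ mu `[-N, N]) => //.
apply: continuous_compact_integrable; first exact: segment_compact.
by apply: continuous_subspaceT; exact: dquot_continuous_r.
Qed.

Definition trunc_hilbert e x := \int[mu]_(y in [set y | e < `|x - y|]) (Phi x y / (x - y)).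

Definition hilbert_reg x :=
  \int[mu]_(y in `[-N, N]) dquot x y + Phi x x * (ln (x + N) - ln (N - x)).

Lemma trunc_hilbert_out e x : M < `|x| -> trunc_hilbert e x = 0.
Proof.
move=> Mx; rewrite /trunc_hilbert (@eq_Rintegral _ _ _ mu _ (fun=> 0)).
  by rewrite Rintegral_cst ?mul0r //; exact: measurable_far.
by move=> y _; rewrite Phi_supp ?mul0r //; left.
Qed.

Lemma trunc_hilbert_split e x : `|x| < M + 1 -> 0 < e -> e < 1 ->
  trunc_hilbert e x = \int[mu]_(y in `[-N, N] `&` [set y | e < `|x - y|]) dquot x y +
                      Phi x x * (ln (x + N) - ln (N - x)).
Proof.
move=> xM e0 e1; move: (xM); rewrite ltr_norml => /andP[x1 x2].
set S := `[-N, N] `&` _.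
have mS : measurable S by apply: measurableI => //; exact: measurable_far.
have iinv := integrable_inv_subr_far e0 mS (@subset_refl _ S).
rewrite /trunc_hilbert (@Rintegral_setI_vanishing _ _ `[-N, N]); last first.
  move=> y _ /=; rewrite in_itv /= -ler_norml => yN; rewrite Phi_supp ?mul0r //.
  by right; rewrite ltNge; apply: contra_notN yN => /le_trans; apply; lra.
rewrite setIC -/S (@eq_Rintegral _ _ _ mu _ (fun y => dquot x y + Phi x x * (x - y)^-1)).
  rewrite RintegralD //; first last.
  - exact: (eq_integrable _ _ _ _ (integrableZl _ _ iinv)).
  - by apply: integrable_dquot => //; exact: subIsetl.
  - by rewrite RintegralZl // Rintegral_inv_subr_excised ?opprK //; lra.
move=> y; rewrite inE => -[_ /= ey]; have yx := far_neq (ltW e0) ey.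
have xy0 : x - y != 0 by rewrite subr_eq0 eq_sym.
by rewrite /dquot (negbTE yx); field.
Qed.

Lemma trunc_hilbert_cvg_reg x : `|x| < M + 1 ->
  trunc_hilbert e x @[e --> 0^'+] --> hilbert_reg x.
Proof.
move=> xM; move: (xM); rewrite ltr_norml => /andP[x1 x2].
have [L dqL] := dquot_bounded.
apply: (@cvg_at_right0_linear_rate _ _ _ (L *+ 2)); near=> e.
have e0 : 0 < e by near: e; exact: nbhs_right_gt.
have e1 : e < 1 by near: e; apply: nbhs_right_lt; exact: ltr01.
rewrite trunc_hilbert_split // /hilbert_reg [X in _ - X]addrC addrKA.
rewrite mulrnAl -mulrnAr; apply: Rintegral_excision_le => //.
- exact: integrable_dquot.
- by move=> y /=; rewrite !in_itv /= => /andP[? ?]; apply/andP; split; lra.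
- move=> y /=; rewrite in_itv /= -ler_norml => yN; apply: dqL => //.
  by rewrite ler_norml; apply/andP; split; lra.
Unshelve. all: by end_near.
Qed.

Lemma trunc_hilbert_cvg_out x : M < `|x| -> trunc_hilbert e x @[e --> 0^'+] --> 0.
Proof.
move=> Mx; rewrite (_ : (fun e => _) = fun=> 0); first exact: cvg_cst.
by apply/funext => e; exact: trunc_hilbert_out.
Qed.

Lemma hilbert_diag_reg x : `|x| < M + 1 -> hilbert_y Phi x x = hilbert_reg x.
Proof. by move=> xM; exact: cvg_lim (trunc_hilbert_cvg_reg xM). Qed.

Lemma hilbert_diag_out x : M < `|x| -> hilbert_y Phi x x = 0.
Proof. by move=> Mx; exact: cvg_lim (trunc_hilbert_cvg_out Mx). Qed.

Lemma trunc_hilbert_cvg x : trunc_hilbert e x @[e --> 0^'+] --> hilbert_y Phi x x.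
Proof.
have [xM|Mx] := lerP `|x| M; last first.
  by rewrite hilbert_diag_out //; exact: trunc_hilbert_cvg_out.
have xM1 : `|x| < M + 1 by lra.
by rewrite hilbert_diag_reg //; exact: trunc_hilbert_cvg_reg.
Qed.

Lemma hilbert_reg_continuous x : `|x| < M + 1 -> {for x, continuous hilbert_reg}.
Proof.
move=> xM; move: (xM); rewrite ltr_norml => /andP[x1 x2].
have [L dqL] := dquot_bounded.
have int_cont : {in `]-(M + 1), M + 1[%classic,
    continuous (fun t => \int[mu]_(y in `[-N, N]) dquot t y)}.
  apply: (@continuity_under_integral R _ _ mu dquot _ _ _ _ _ _ (cst L)) => //.
  - by move=> t _; exact: integrable_dquot.
  - by apply: aeW => y _ t _; exact: dquot_continuous_l.
  - apply: measurable_bounded_integrable => //; last exact: bounded_cst.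
    change (mu (`[(- N)%R, N]%classic : set R) < +oo)%E.
    by rewrite lebesgue_measure_itv /=; case: ifP => // _; rewrite -EFinB ltry.
  - move=> t /=; rewrite in_itv /= => /andP[t1 t2]; apply: aeW => y /=.
    rewrite in_itv /= -ler_norml => yN; apply: dqL => //.
    by rewrite ler_norml; apply/andP; split; lra.
apply: cvgD; first by apply: int_cont; rewrite inE /= in_itv /= x1 x2.
apply: cvgM; first by apply: cvg_Phi; exact: cvg_id.
have [xN Nx] : 0 < x + N /\ 0 < N - x by split; lra.
apply: cvgB.
- have xNcvg : (fun t => t + N) @ x --> x + N.
    by apply: cvgD; [exact: cvg_id | exact: cvg_cst].
  exact: cvg_comp xNcvg (continuous_ln xN).
- have Nxcvg : (fun t => N - t) @ x --> N - x.
    by apply: cvgB; [exact: cvg_cst | exact: cvg_id].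
  exact: cvg_comp Nxcvg (continuous_ln Nx).
Qed.

Lemma measurable_hilbert_diag : measurable_fun setT (fun x => hilbert_y Phi x x).
Proof.
set O : set R := `]-(M + 1), M + 1[%classic.
have inO x : O x <-> `|x| < M + 1 by rewrite /O /= in_itv /= ltr_norml.
have mO : measurable O by exact: measurable_itv.
rewrite -(setUv O); apply/measurable_funU => //; first exact: measurableC.
split.
- apply: (eq_measurable_fun hilbert_reg).
    by move=> x; rewrite inE => /inO xM; rewrite hilbert_diag_reg.
  apply: open_continuous_measurable_fun; first exact: interval_open.
  by move=> x; rewrite inE => /inO; exact: hilbert_reg_continuous.
- apply: (eq_measurable_fun (cst (0 : R))); last exact: measurable_cst.
  move=> x; rewrite inE => /= /inO xM; rewrite hilbert_diag_out //; lra.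
Qed.

Lemma mul_hilbert_diag_bounded (phi : R -> R) : continuous phi ->
  exists K, forall x, `|phi x * hilbert_y Phi x x| <= K.
Proof.
move=> cphi; have [K K0 phiK] : exists2 K, 0 <= K &
    forall x, `|x| <= M -> `|phi x * hilbert_reg x| <= K.
  apply: continuous_bounded_segment => x xM; apply: cvgM; first exact: cphi.
  by apply: hilbert_reg_continuous; lra.
exists K => x; have [xM|Mx] := lerP `|x| M.
- by rewrite hilbert_diag_reg; [exact: phiK | lra].
- by rewrite hilbert_diag_out // mulr0 normr0.
Qed.

Lemma integrable_mul_hilbert_diag (phi : R -> R) (K : R) : continuous phi ->
  (forall x, `|phi x * hilbert_y Phi x x| <= K) ->
  mu.-integrable setT (EFin \o (fun x => phi x * hilbert_y Phi x x)).
Proof.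
move=> cphi phiK; apply: (@integrable_bounded_compact_support _ _ _ K M) => //.
- apply: measurable_funM; last exact: measurable_hilbert_diag.
  exact: continuous_measurable_fun.
- by move=> x _ Mx; rewrite hilbert_diag_out // mulr0.
Qed.

Lemma integrable_trunc_kernel e x : 0 < e ->
  mu.-integrable [set y | e < `|x - y|] (EFin \o (fun y => Phi x y / (x - y))).
Proof.
move=> e0; have [K K0 PhiK] := @continuous_bounded_segment _ (Phi x) M
  (fun y _ => @Phi_continuous_r x y).
apply: (@integrable_bounded_compact_support _ _ _ (K / e) M) => //.
- exact: measurable_far.
- apply: measurable_funM.
    apply: (measurable_funS measurableT) => //.
    by apply: continuous_measurable_fun; exact: Phi_continuous_r.
  apply: measurable_fun_inv_subr; first exact: measurable_far.
  by move=> y; exact: far_neq (ltW e0).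
- move=> y /= ey; rewrite normrM normfV.
  have [yM|My] := lerP `|y| M; last first.
    by rewrite Phi_supp ?normr0 ?mul0r; [rewrite divr_ge0 // ltW | right].
  apply: ler_pM => //; first exact: PhiK.
  by rewrite lef_pV2 ?posrE ?(lt_trans e0 ey) ?ltW.
- by move=> y _ My; rewrite Phi_supp ?mul0r //; right.
Qed.

Lemma hilbert_diagZ (phi : R -> R) x :
  hilbert_y (fun x y => phi x * Phi x y) x x = phi x * hilbert_y Phi x x.
Proof.
apply: (cvg_lim (@Rhausdorff R)).
have scale : {near 0^'+, (fun e => phi x * trunc_hilbert e x) =1
    (fun e => \int[mu]_(y in [set y | e < `|x - y|]) (phi x * Phi x y / (x - y)))}.
  near=> e; have e0 : 0 < e by near: e; exact: nbhs_right_gt.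
  rewrite /trunc_hilbert -RintegralZl; first by apply: eq_Rintegral => y _; rewrite mulrA.
    exact: measurable_far.
  exact: integrable_trunc_kernel.
apply: cvg_trans (near_eq_cvg scale) _.
by apply: cvgM; [exact: cvg_cst | exact: trunc_hilbert_cvg].
Unshelve. all: by end_near.
Qed.

Lemma Kir_cvg x : Kir e Phi x @[e --> 0^'+] --> x * hilbert_y Phi x x.
Proof.
have [->|x0] := eqVneq x 0.
  rewrite mul0r (_ : (fun e => Kir e Phi 0) = fun=> 0); first exact: cvg_cst.
  by apply/funext => e; rewrite /Kir sgr0 mulr0 if_same mul0r.
have small_e : {near 0^'+, (fun e => x * trunc_hilbert e x) =1 (fun e => Kir e Phi x)}.
  near=> e; rewrite /Kir ifF //; apply/negbTE; rewrite -ltNge.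
  by near: e; apply: nbhs_right_lt; rewrite normr_gt0.
apply: cvg_trans (near_eq_cvg small_e) _.
by apply: cvgM; [exact: cvg_cst | exact: trunc_hilbert_cvg].
Unshelve. all: by end_near.
Qed.

Lemma pv_inv_hilbert_diag (phi : R -> R) : continuous phi ->
  pv_inv (fun x => phi x * (x * hilbert_y Phi x x)) = S_pairing (fun x y => phi x * Phi x y).
Proof.
move=> cphi; have [K phiHK] := mul_hilbert_diag_bounded cphi.
rewrite /S_pairing (_ : (fun x => _) = fun x => x * (phi x * hilbert_y Phi x x)).
  rewrite (pv_inv_mulr_id (integrable_mul_hilbert_diag cphi phiHK) phiHK).
  by apply: eq_Rintegral => x _; rewrite hilbert_diagZ.
by apply/funext => x; rewrite mulrCA.
Qed.

End TruncatedHilbert.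

Unset Implicit Arguments.

Theorem proposition9p2 (R : realType) (Phi : R -> R -> R) :
  test2 Phi ->
  (forall x : R, Kir e Phi x @[e --> 0^'+] --> x * hilbert_y Phi x x) /\
  (forall phi : R -> R, test1 phi ->
     pv_inv (fun x => phi x * (x * hilbert_y Phi x x)) =
     S_pairing (fun x y => phi x * Phi x y)).
Proof.
move=> [Phi_smooth [M Phi_supp]].
have Phi_cont := (Phi_smooth [::]).2.
have Py_cont := (Phi_smooth [:: false]).2.
have Phi_derivable x y := ((Phi_smooth [::]).1 x y).2.
split=> [x|phi [phi_smooth _]].
  exact: (Kir_cvg Phi_cont Py_cont Phi_derivable Phi_supp).
apply: (pv_inv_hilbert_diag Phi_cont Py_cont Phi_derivable Phi_supp).
by move=> x; apply/differentiable_continuous/derivable1_diffP; exact: (phi_smooth 0%N x).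
Qed.
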